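(* Let $H$ be a combinatorial Hopf monoid, $K\subseteq H$ a Hopf submonoid, $I$ a finite set and $h\in H_I$. Let $\Delta_h$ be the set of set compositions $C$ of $I$ all of whose minors $h_j$ are defined, and let $\Gamma_{K,h}\subseteq\Delta_h$ be the set of those $C\in\Delta_h$ such that some minor $h_j\notin K_{C_j}$. Then: (1) if $C\in\Gamma_{K,h}$ and $D\in\Delta_h$ is a coarsening of $C$ (each block of $D$ is a union of consecutive blocks of $C$, in order), then $D\in\Gamma_{K,h}$; (2) $\Psi_{\varphi_K}(h)=\sum_{C\in\Delta_h\setminus\Gamma_{K,h}}M_{\mathrm{type}(C)}$, i.e. $\Psi_{\varphi_K}(h)$ is the Ehrhart quasisymmetric function $E_{C(\Delta_h\setminus\Gamma_{K,h})}$ enumerating (via $\mathbf a\mapsto\prod_{i\in I}x_{a_i}$) the lattice points $\mathbf a\in\mathbb Z_{>0}^I$ which are constant on the blocks of some $C\in\Delta_h\setminus\Gamma_{K,h}$ and strictly increasing from block to block.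
   Context: A combinatorial Hopf monoid $H$ consists of: for each finite set $I$ a finite set $H_I$, with $H_\emptyset=\{1\}$, and bijections $H_\sigma:H_I\to H_J$ for bijections $\sigma:I\to J$, functorially; associative products $H_S\times H_T\to H_{S\sqcup T}$, $(f,g)\mapsto f\cdot g$, with unit $1$; and for each $S\subseteq I$ partial maps (restriction) $h\mapsto h|_S\in H_S$ and (contraction) $h\mapsto h/S\in H_{I\setminus S}$, with $h|_I=h$, $h/\emptyset=h$, all maps compatible with relabelings, such that for $T\subseteq S\subseteq I$: $(h|_S)|_T=h|_T$, $(h/T)/(S\setminus T)=h/S$, $(h|_S)/T=(h/T)|_{S\setminus T}$, and for $f\in H_A$, $g\in H_B$, $S\subseteq A\sqcup B$: $(f\cdot g)|_S=f|_{S\cap A}\cdot g|_{S\cap B}$ and $(f\cdot g)/S=f/(S\cap A)\cdot g/(S\cap B)$; in each equation one side is defined iff the other is. A Hopf submonoid $K$ is a family $K_I\subseteq H_I$ closed under relabeling, containing $1$, closed under products, and such that restrictions and contractions of elements of $K$, when defined, lie in $K$. The character $\varphi_K$ is $\varphi_K(h)=1$ if $h\in K_I$ and $0$ otherwise (and $0$ on undefined elements). For a set composition $C=(C_1,\dots,C_k)$ of $I$ (nonempty disjoint blocks with union $I$), set $S_j=C_1\cup\dots\cup C_j$, $S_0=\emptyset$, and the minors $h_j=(h|_{S_j})/S_{j-1}\in H_{C_j}$; $\mathrm{type}(C)=(|C_1|,\dots,|C_k|)$; $M_\alpha$ is the monomial quasisymmetric function. $\Psi_\varphi(h)=\sum_{C}\big(\prod_{j}\varphi(h_j)\big)M_{\mathrm{type}(C)}$,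 the sum over all set compositions of $I$. *)

From HB Require Import structures.
From mathcomp Require Import all_boot all_order all_algebra.
Set Implicit Arguments. Unset Strict Implicit. Unset Printing Implicit Defensive.
Import GRing.Theory.

(* Finite sets of labels.  Every finite set is in bijection with a finite    *)
(* subset of nat, so (as usual for species) we index by finite subsets of    *)
(* nat, represented canonically by strictly increasing sequences.            *)
Definition fnset := {s : seq nat | sorted ltn s}.

Lemma fset_of_proof (s : seq nat) : sorted ltn (sort leq (undup s)).
Proof.
by rewrite ltn_sorted_uniq_leq sort_uniq undup_uniq (sort_sorted leq_total).
Qed.

Definition fset_of (s : seq nat) : fnset := exist (fun t => sorted ltn t) _ (fset_of_proof s).
Definition fs (A : fnset) : seq nat := sval A.

Definition fempty : fnset := fset_of [::].
Definition fU (A B : fnset) : fnset := fset_of (fs A ++ fs B).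
Definition fI (A B : fnset) : fnset := fset_of [seq x <- fs A | x \in fs B].
Definition fD (A B : fnset) : fnset := fset_of [seq x <- fs A | x \notin fs B].
Definition fsub (A B : fnset) : bool := all (fun x => x \in fs B) (fs A).
Definition fdisj (A B : fnset) : bool := all (fun x => x \notin fs B) (fs A).
Definition fimg (s : nat -> nat) (A : fnset) : fnset := fset_of (map s (fs A)).
Definition bigU (Cs : seq fnset) : fnset := foldr fU fempty Cs.

Definition fbij (I J : fnset) (s : nat -> nat) : Prop :=
  {in fs I &, injective s} /\ fimg s I = J.

Definition idn : nat -> nat := fun x => x.

Definition omap2 (A B C : Type) (F : A -> B -> C) (oa : option A) (ob : option B)
  : option C :=
  match oa, ob with Some a, Some b => Some (F a b) | _, _ => None end.

(*  hrel I J s   : the relabeling H_s : H_I -> H_J (s a bijection I -> J)   *)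
(*  hmul A B     : product H_A x H_B -> H_{A u B} (A, B disjoint)           *)
(*  hres I S h   : h|_S  (partial, None = undefined)     for S subset I     *)
(*  hcon I S h   : h/S   (partial, None = undefined)     for S subset I     *)
(* Canonical identifications between equal index sets are performed by     *)
(* relabeling along the identity (hrel _ _ idn).                             *)
Unset Implicit Arguments.
Record HopfMonoid := {
  hcar : fnset -> finType;
  hrel : forall I J : fnset, (nat -> nat) -> hcar I -> hcar J;
  hone : hcar fempty;
  hmul : forall A B : fnset, hcar A -> hcar B -> hcar (fU A B);
  hres : forall I S : fnset, hcar I -> option (hcar S);
  hcon : forall I S : fnset, hcar I -> option (hcar (fD I S));
  hrel_ext : forall I J s t (x : hcar I), fbij I J s -> {in fs I, s =1 t} ->
    hrel I J s x = hrel I J t x;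
  hrel_id : forall I (x : hcar I), hrel I I idn x = x;
  hrel_comp : forall I J L s t (x : hcar I), fbij I J s -> fbij J L t ->
    hrel I L (t \o s) x = hrel J L t (hrel I J s x);
  hempty : forall x : hcar fempty, x = hone;
  hmul_assoc : forall A B C (f : hcar A) (g : hcar B) (k : hcar C),
    fdisj A B -> fdisj A C -> fdisj B C ->
    hmul (fU A B) C (hmul A B f g) k
    = hrel (fU A (fU B C)) (fU (fU A B) C) idn (hmul A (fU B C) f (hmul B C g k));
  hmul1l : forall A (f : hcar A), hmul fempty A hone f = hrel A (fU fempty A) idn f;
  hmul1r : forall A (f : hcar A), hmul A fempty f hone = hrel A (fU A fempty) idn f;
  hmul_rel : forall A B A' B' s (f : hcar A) (g : hcar B),
    fdisj A B -> fbij (fU A B) (fU A' B') s -> fbij A A' s -> fbij B B' s ->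
    hrel (fU A B) (fU A' B') s (hmul A B f g)
    = hmul A' B' (hrel A A' s f) (hrel B B' s g);
  hres_full : forall I (h : hcar I), hres I I h = Some h;
  hcon_empty : forall I (h : hcar I),
    hcon I fempty h = Some (hrel I (fD I fempty) idn h);
  hres_res : forall I S T (h : hcar I), fsub T S -> fsub S I ->
    obind (hres S T) (hres I S h) = hres I T h;
  hcon_con : forall I S T (h : hcar I), fsub T S -> fsub S I ->
    obind (hcon (fD I T) (fD S T)) (hcon I T h)
    = omap (hrel (fD I S) (fD (fD I T) (fD S T)) idn) (hcon I S h);
  hres_con : forall I S T (h : hcar I), fsub T S -> fsub S I ->
    obind (hcon S T) (hres I S h) = obind (hres (fD I T) (fD S T)) (hcon I T h);
  hres_mul : forall A B S (f : hcar A) (g : hcar B), fdisj A B -> fsub S (fU A B) ->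
    hres (fU A B) S (hmul A B f g)
    = omap (hrel (fU (fI S A) (fI S B)) S idn)
        (omap2 (hmul (fI S A) (fI S B)) (hres A (fI S A) f) (hres B (fI S B) g));
  hcon_mul : forall A B S (f : hcar A) (g : hcar B), fdisj A B -> fsub S (fU A B) ->
    hcon (fU A B) S (hmul A B f g)
    = omap (hrel (fU (fD A (fI S A)) (fD B (fI S B))) (fD (fU A B) S) idn)
        (omap2 (hmul (fD A (fI S A)) (fD B (fI S B)))
           (hcon A (fI S A) f) (hcon B (fI S B) g));
  hres_rel : forall I J S s (h : hcar I), fbij I J s -> fsub S I ->
    omap (hrel S (fimg s S) s) (hres I S h) = hres J (fimg s S) (hrel I J s h);
  hcon_rel : forall I J S s (h : hcar I), fbij I J s -> fsub S I ->
    omap (hrel (fD I S) (fD J (fimg s S)) s) (hcon I S h)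
    = hcon J (fimg s S) (hrel I J s h)
}.
Set Implicit Arguments.

Arguments hrel {_}.
Arguments hone {_}.
Arguments hmul {_ A B}.
Arguments hres {_}.
Arguments hcon {_ I}.

Definition is_submonoid (H : HopfMonoid) (K : forall I, pred (hcar H I)) : Prop :=
  [/\ (forall I J s (x : hcar H I), fbij I J s -> K I x -> K J (hrel I J s x)),
      K fempty hone,
      (forall A B (f : hcar H A) (g : hcar H B), fdisj A B -> K A f -> K B g ->
          K (fU A B) (hmul f g)),
      (forall I S (h : hcar H I) h', fsub S I -> K I h -> hres I S h = Some h' ->
          K S h') &
      (forall I S (h : hcar H I) h', fsub S I -> K I h -> hcon S h = Some h' ->
          K (fD I S) h')].

Definition phiK (H : HopfMonoid) (K : forall I, pred (hcar H I)) (I : fnset)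
  (o : option (hcar H I)) : int :=
  if o is Some x then Posz (nat_of_bool (K I x)) else 0%R.

Definition is_setcomp (I : fnset) (C : seq fnset) : bool :=
  [&& all (fun B => fs B != [::]) C, pairwise fdisj C & bigU C == I].

Definition pref (C : seq fnset) (j : nat) : fnset := bigU (take j C).

(* the minor h_{j+1} = (h|_{S_{j+1}})/S_j  (0-indexed j) *)
Definition minor (H : HopfMonoid) (I : fnset) (h : hcar H I) (C : seq fnset) (j : nat)
  : option (hcar H (fD (pref C j.+1) (pref C j))) :=
  obind (hcon (pref C j)) (hres I (pref C j.+1) h).

Definition ctype (C : seq fnset) : seq nat := map (fun B => size (fs B)) C.

Fixpoint subseqs (s : seq nat) : seq (seq nat) :=
  if s is x :: s' then [seq x :: t | t <- subseqs s'] ++ subseqs s' else [:: [::]].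
Definition subsets (I : fnset) : seq fnset := map fset_of (subseqs (fs I)).
Fixpoint tuples_of (T : Type) (k : nat) (L : seq T) : seq (seq T) :=
  if k is k'.+1 then [seq x :: t | x <- L, t <- tuples_of k' L] else [:: [::]].
Definition setcomps (I : fnset) : seq (seq fnset) :=
  [seq C <- flatten [seq tuples_of k (subsets I) | k <- iota 0 (size (fs I)).+1]
     | is_setcomp I C].

Definition inDelta (H : HopfMonoid) (I : fnset) (h : hcar H I) (C : seq fnset) : bool :=
  is_setcomp I C && all (fun j => isSome (minor h C j)) (iota 0 (size C)).

Definition notinK (H : HopfMonoid) (K : forall I, pred (hcar H I)) (I : fnset)
  (o : option (hcar H I)) : bool := if o is Some x then ~~ K I x else false.

Definition inGamma (H : HopfMonoid) (K : forall I, pred (hcar H I)) (I : fnset)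
  (h : hcar H I) (C : seq fnset) : bool :=
  inDelta h C && has (fun j => notinK K (minor h C j)) (iota 0 (size C)).

Definition coarsening (D C : seq fnset) : Prop :=
  exists r : seq nat,
    [/\ all (fun k => 0 < k) r, sumn r = size C & D = map bigU (reshape r C)].

(* A power series is given by its coefficient function on monomials; the    *)
(* monomial x_1^{e_1} x_2^{e_2} ... x_m^{e_m} is encoded by e = [:: e_1;..; *)
(* e_m] (trailing zeros irrelevant).                                         *)
Definition powser := seq nat -> int.

(* M_alpha = sum_{i_1 < ... < i_k} x_{i_1}^{alpha_1} ... x_{i_k}^{alpha_k} *)
Definition Mono (alpha : seq nat) : powser :=
  fun e => Posz (nat_of_bool ([seq k <- e | 0 < k] == alpha)).

Definition Psi (H : HopfMonoid) (phi : forall I, option (hcar H I) -> int)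
  (I : fnset) (h : hcar H I) : powser :=
  fun e => (\sum_(C <- setcomps I)
              (\prod_(j < size C) phi _ (minor h C j)) * Mono (ctype C) e)%R.

(* Ehrhart quasisymmetric function of a family S of set compositions of I:  *)
(* enumerates the lattice points a in Z_{>0}^I (weight prod_{i in I} x_{a_i})*)
(* which are constant on the blocks of some C in S and strictly increasing   *)
(* from block to block.  A lattice point of weight x^e has all coordinates   *)
(* <= size e; it is encoded by a : 'I_|I| -> 'I_(size e), the coordinate at  *)
(* the i-th element of I (in increasing order) being (a i).+1.               *)
Definition blockidx (C : seq fnset) (x : nat) : nat := find (fun B => x \in fs B) C.

Definition in_cone (I : fnset) (C : seq fnset) (m : nat)
  (a : {ffun 'I_(size (fs I)) -> 'I_m}) : bool :=
  [forall i : 'I_(size (fs I)), forall j : 'I_(size (fs I)),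
     let bi := blockidx C (nth 0 (fs I) i) in
     let bj := blockidx C (nth 0 (fs I) j) in
     ((bi == bj) ==> (a i == a j)) && ((bi < bj) ==> (a i < a j))].

Definition weight_is (I : fnset) (e : seq nat)
  (a : {ffun 'I_(size (fs I)) -> 'I_(size e)}) : bool :=
  [forall k : 'I_(size e), nth 0 e k == #|[set i | a i == k]|].

Definition Ehrhart (S : pred (seq fnset)) (I : fnset) : powser :=
  fun e => Posz #|[set a : {ffun 'I_(size (fs I)) -> 'I_(size e)} |
               weight_is a && has (fun C => S C && in_cone C a) (setcomps I)]|.

From mathcomp Require Import all_boot all_order all_algebra.
Import GRing.Theory.
Set Implicit Arguments. Unset Strict Implicit. Unset Printing Implicit Defensive.

(* (1) If the minor h_i of C is not in K and D coarsens C, let D_j be the block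
   of D containing C_i.  Then h_i = (h_{D_j}|_{S_i \ P})/(S_{i-1} \ P), where
   P is the union of the blocks of D before D_j, so h_{D_j} is not in K
   either, K being closed under restriction and contraction.
   (2) The product of the phi_K(h_j) is the indicator of C in Delta \ Gamma.
   (3) A lattice point of weight x^e in the open cone of C is constant on
   blocks with strictly increasing values, so these values must be the
   positions of the nonzero entries of e; such a point therefore exists iff
   type(C) is e with zeros removed, it is then unique, and it determines C.
   Hence the Ehrhart function of a family of compositions is the sum of the
   M_type(C) over the family. *)

Lemma mem_fset_of s x : (x \in fs (fset_of s)) = (x \in s).
Proof. by rewrite /fs /fset_of /= mem_sort mem_undup. Qed.

Lemma fs_sorted (A : fnset) : sorted ltn (fs A).
Proof. exact: (svalP A). Qed.

Lemma fs_uniq (A : fnset) : uniq (fs A).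
Proof. exact: (sorted_uniq ltn_trans ltnn (fs_sorted A)). Qed.

Lemma fnset_ext (A B : fnset) : fs A =i fs B -> A = B.
Proof.
by move=> eAB; apply/val_inj/(irr_sorted_eq ltn_trans ltnn (fs_sorted A) (fs_sorted B)).
Qed.

Lemma fs_fset_of s : sorted ltn s -> fs (fset_of s) = s.
Proof.
move=> ss; rewrite /fs /fset_of /= undup_id ?(sorted_uniq ltn_trans ltnn ss) //.
by apply: (sorted_sort leq_trans); apply: sub_sorted ss => a b; apply: ltnW.
Qed.

Lemma mem_fU A B x : (x \in fs (fU A B)) = (x \in fs A) || (x \in fs B).
Proof. by rewrite mem_fset_of mem_cat. Qed.

Lemma mem_fD A B x : (x \in fs (fD A B)) = (x \in fs A) && (x \notin fs B).
Proof. by rewrite mem_fset_of mem_filter andbC. Qed.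

Lemma mem_bigU Cs x : (x \in fs (bigU Cs)) = has (fun B => x \in fs B) Cs.
Proof.
elim: Cs => [|B Cs IH]; first by rewrite mem_fset_of.
by rewrite -[bigU _]/(fU B (bigU Cs)) mem_fU IH.
Qed.

Lemma fsubP A B : reflect {subset fs A <= fs B} (fsub A B).
Proof. exact: allP. Qed.

Lemma fdisjP A B : reflect (forall x, x \in fs A -> x \notin fs B) (fdisj A B).
Proof. exact: allP. Qed.

Lemma fsub_trans A B X : fsub A B -> fsub B X -> fsub A X.
Proof. by move=> /fsubP sAB /fsubP sBX; apply/fsubP => x /sAB /sBX. Qed.

Lemma fsubD A B X : fsub A B -> fsub (fD A X) (fD B X).
Proof.
by move=> /fsubP sAB; apply/fsubP => x; rewrite !mem_fD => /andP [/sAB -> ->].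
Qed.

Section SetComposition.
Variables (I : fnset) (C : seq fnset).
Hypothesis scC : is_setcomp I C.

Lemma mem_setcomp x : (x \in fs I) = has (fun B => x \in fs B) C.
Proof. by case/and3P: scC => _ _ /eqP <-; rewrite mem_bigU. Qed.

Lemma blockidx_lt x : x \in fs I -> blockidx C x < size C.
Proof. by rewrite mem_setcomp /blockidx has_find. Qed.

Lemma mem_blockidx x : x \in fs I -> x \in fs (nth fempty C (blockidx C x)).
Proof. by rewrite mem_setcomp; apply: (nth_find fempty (a := fun B => x \in fs B)). Qed.

Lemma mem_nth_setcomp t x : t < size C ->
  (x \in fs (nth fempty C t)) = (x \in fs I) && (blockidx C x == t).
Proof.
move=> ltC; apply/idP/andP => [xCt | [xI /eqP <-]]; last exact: mem_blockidx.
have xI : x \in fs I.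
  by rewrite mem_setcomp; apply/hasP; exists (nth fempty C t) => //; apply: mem_nth.
split=> //; rewrite eqn_leq; apply/andP; split; rewrite leqNgt; apply/negP => ltbt.
  by move: (before_find fempty ltbt); rewrite /= xCt.
case/and3P: scC => _ /(pairwiseP fempty) disjC _.
have := disjC _ _ (ltn_trans ltbt ltC) ltC ltbt.
by move=> /fdisjP /(_ x (mem_blockidx xI)); rewrite xCt.
Qed.

Lemma setcomp_block_nonempty t : t < size C -> exists2 x, x \in fs I & blockidx C x = t.
Proof.
move=> ltC; case/and3P: scC => /allP nonempty _ _.
have := nonempty _ (mem_nth fempty ltC); case Et: (fs (nth fempty C t)) => [|x s] // _.
have : x \in fs (nth fempty C t) by rewrite Et inE eqxx.
by rewrite mem_nth_setcomp // => /andP [xI /eqP]; exists x.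
Qed.

Lemma count_blockidx t : t < size C ->
  count (fun x => blockidx C x == t) (fs I) = size (fs (nth fempty C t)).
Proof.
move=> ltC; rewrite -size_filter; apply/perm_size/uniq_perm.
- exact: (filter_uniq _ (fs_uniq I)).
- exact: fs_uniq.
by move=> x; rewrite mem_filter mem_nth_setcomp // andbC.
Qed.

End SetComposition.

Definition nzpos (e : seq nat) : seq nat := [seq k <- iota 0 (size e) | 0 < nth 0 e k].

Lemma filter_nzpos e : [seq k <- e | 0 < k] = map (nth 0 e) (nzpos e).
Proof. by rewrite /nzpos -filter_map map_nth_iota0 // take_size. Qed.

Lemma nzpos_sorted e : sorted ltn (nzpos e).
Proof. exact: (sorted_filter ltn_trans _ (iota_ltn_sorted _ _)). Qed.

Lemma nzpos_uniq e : uniq (nzpos e).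
Proof. exact: (sorted_uniq ltn_trans ltnn (nzpos_sorted e)). Qed.

Lemma mem_nzpos e k : (k \in nzpos e) = (k < size e) && (0 < nth 0 e k).
Proof. by rewrite mem_filter mem_iota add0n andbC. Qed.

Lemma card_nth_count (s : seq nat) (P : pred nat) :
  #|[set i : 'I_(size s) | P (nth 0 s i)]| = count P s.
Proof.
rewrite -sum1_card -sum1_count (big_nth 0) big_mkord.
by apply: eq_bigl => i; rewrite inE.
Qed.

Section Cone.
Variables (I : fnset) (C : seq fnset) (e : seq nat).
Hypothesis scC : is_setcomp I C.
Local Notation n := (size (fs I)).
Local Notation m := (size e).
Local Notation bi i := (blockidx C (nth 0 (fs I) i)).

Lemma blockidx_ord_lt (i : 'I_n) : bi i < size C.
Proof. by apply: (blockidx_lt scC); apply: mem_nth. Qed.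

Lemma blockidx_ord_surj t : t < size C -> exists i : 'I_n, bi i = t.
Proof.
move=> ltC; have [x xI <-] := setcomp_block_nonempty scC ltC.
have xi : index x (fs I) < n by rewrite index_mem.
by exists (Ordinal xi); rewrite /= nth_index.
Qed.

(* The common value of a cone point on the t-th block (0 for t out of range). *)
Definition cone_value (a : {ffun 'I_n -> 'I_m}) (t : nat) : nat :=
  if [pick i : 'I_n | bi i == t] is Some i then val (a i) else 0.

Section ConePoint.
Variable a : {ffun 'I_n -> 'I_m}.
Hypothesis cone_a : in_cone C a.
Local Notation v := (cone_value a).

Lemma cone_point_eq (i j : 'I_n) : bi i = bi j -> a i = a j.
Proof.
move=> eij; have /forallP/(_ j)/andP [/implyP aij _] := forallP cone_a i.
exact/eqP/aij/eqP.
Qed.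

Lemma cone_point_lt (i j : 'I_n) : bi i < bi j -> a i < a j.
Proof.
by move=> lij; have /forallP/(_ j)/andP [_ /implyP aij] := forallP cone_a i; apply: aij.
Qed.

Lemma cone_valueE (i : 'I_n) : val (a i) = v (bi i).
Proof.
rewrite /cone_value; case: pickP => [j /eqP bij | none].
  by rewrite (cone_point_eq bij).
by move: (none i); rewrite eqxx.
Qed.

Lemma cone_value_ltm t : t < size C -> v t < m.
Proof. by move=> /blockidx_ord_surj [i <-]; rewrite -cone_valueE ltn_ord. Qed.

Lemma cone_value_lt t t' : t < t' -> t' < size C -> v t < v t'.
Proof.
move=> ltt lt'; have [i ei] := blockidx_ord_surj (ltn_trans ltt lt').
have [j ej] := blockidx_ord_surj lt'.
by rewrite -ei -ej -!cone_valueE; apply: cone_point_lt; rewrite ei ej.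
Qed.

Lemma cone_value_inj t t' : t < size C -> t' < size C -> (v t == v t') = (t == t').
Proof.
move=> lt lt'; case: (ltngtP t t') => [ltt | ltt | -> ]; rewrite ?eqxx //.
  by apply/negbTE; rewrite neq_ltn cone_value_lt.
by apply/negbTE; rewrite neq_ltn (cone_value_lt ltt) ?orbT.
Qed.

Hypothesis weight_a : weight_is a.

Lemma weight_card k : k < m -> nth 0 e k = #|[set i | val (a i) == k]|.
Proof.
move=> km; have /eqP -> := forallP weight_a (Ordinal km).
by apply: eq_card => i; rewrite !inE.
Qed.

Lemma cone_values_nzpos : map v (iota 0 (size C)) = nzpos e.
Proof.
have sorted_v : sorted ltn (map v (iota 0 (size C))).
  apply: (homo_sorted_in (P := gtn (size C))); last exact: iota_ltn_sorted.
    by move=> t t' _ lt' /= ltt; apply: cone_value_lt.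
  by apply/allP => t; rewrite mem_iota.
apply: (irr_sorted_eq ltn_trans ltnn sorted_v (nzpos_sorted e)) => k.
rewrite mem_nzpos; apply/mapP/andP => [[t] | [km ek]].
  rewrite mem_iota add0n => /andP [_ ltC] ->.
  split; first exact: cone_value_ltm.
  have [i ei] := blockidx_ord_surj ltC.
  by rewrite weight_card ?cone_value_ltm //; apply/card_gt0P; exists i; rewrite inE cone_valueE ei.
rewrite weight_card // in ek; have [j] := card_gt0P ek; rewrite inE => /eqP ajk.
by exists (bi j); rewrite ?mem_iota ?add0n ?blockidx_ord_lt // -cone_valueE ajk.
Qed.

Lemma size_nzpos_setcomp : size (nzpos e) = size C.
Proof. by rewrite -cone_values_nzpos size_map size_iota. Qed.

Lemma cone_point_nzpos (i : 'I_n) : val (a i) = nth 0 (nzpos e) (bi i).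
Proof.
have ltC := blockidx_ord_lt i.
by rewrite -cone_values_nzpos (nth_map 0) ?size_iota // nth_iota // cone_valueE.
Qed.

Lemma cone_weight_type : [seq k <- e | 0 < k] = ctype C.
Proof.
rewrite filter_nzpos -cone_values_nzpos /ctype -map_comp.
rewrite -[in RHS](mkseq_nth fempty C) /mkseq -map_comp.
apply/eq_in_map => t; rewrite mem_iota add0n /= => ltC.
rewrite weight_card ?cone_value_ltm // -(count_blockidx scC ltC) -card_nth_count.
apply: eq_card => i; rewrite !inE cone_valueE.
exact: cone_value_inj (blockidx_ord_lt i) ltC.
Qed.

End ConePoint.

Lemma cone_point_unique (a a' : {ffun 'I_n -> 'I_m}) :
  in_cone C a -> weight_is a -> in_cone C a' -> weight_is a' -> a = a'.
Proof.
move=> ca wa ca' wa'; apply/ffunP => i; apply: val_inj.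
by rewrite (cone_point_nzpos ca wa) (cone_point_nzpos ca' wa').
Qed.

Lemma cone_point_exists : [seq k <- e | 0 < k] = ctype C ->
  exists a : {ffun 'I_n -> 'I_m}, in_cone C a && weight_is a.
Proof.
move=> typeC.
have size_nz : size (nzpos e) = size C.
  by rewrite -(size_map (nth 0 e)) -filter_nzpos typeC size_map.
have nz_bi (i : 'I_n) : nth 0 (nzpos e) (bi i) \in nzpos e.
  by rewrite mem_nth // size_nz blockidx_ord_lt.
have lt_m (i : 'I_n) : nth 0 (nzpos e) (bi i) < m.
  by have := nz_bi i; rewrite mem_nzpos => /andP [].
have nz_inj (i : 'I_n) t : t < size C ->
    (nth 0 (nzpos e) (bi i) == nth 0 (nzpos e) t) = (bi i == t).
  by move=> ltC; rewrite nth_uniq ?nzpos_uniq ?size_nz ?blockidx_ord_lt.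
exists [ffun i => Ordinal (lt_m i)]; apply/andP; split.
  apply/forallP => i; apply/forallP => j; rewrite !ffunE /=; apply/andP; split.
    by apply/implyP => /eqP eij; apply/eqP/val_inj; rewrite /= eij.
  apply/implyP => lij; apply: (sorted_ltn_nth ltn_trans 0 (nzpos_sorted e)) => //;
    by rewrite inE size_nz blockidx_ord_lt.
apply/forallP => k; case: (boolP (0 < nth 0 e k)) => ek.
  have kin : val k \in nzpos e by rewrite mem_nzpos ltn_ord ek.
  set t := index (val k) (nzpos e).
  have ltC : t < size C by rewrite -size_nz index_mem.
  have tk : nth 0 (nzpos e) t = k by rewrite nth_index.
  have : nth 0 [seq k <- e | 0 < k] t = nth 0 e k.
    by rewrite filter_nzpos (nth_map 0) ?size_nz // tk.
  rewrite typeC /ctype (nth_map fempty) // => <-.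
  rewrite -(count_blockidx scC ltC) -card_nth_count; apply/eqP/eq_card => i.
  by rewrite !inE ffunE -(inj_eq val_inj) /= -tk nz_inj.
rewrite lt0n negbK in ek; rewrite (eqP ek) eq_sym cards_eq0; apply/eqP/setP => i.
rewrite !inE ffunE -(inj_eq val_inj) /=; apply/negbTE/eqP => aik.
by have := nz_bi i; rewrite aik mem_nzpos (eqP ek) ltnn andbF.
Qed.

Lemma card_cone_weight :
  #|[set a : {ffun 'I_n -> 'I_m} | weight_is a && in_cone C a]|
  = nat_of_bool ([seq k <- e | 0 < k] == ctype C).
Proof.
case: eqP => [typeC | typeNC] /=.
  have [a0 /andP [ca0 wa0]] := cone_point_exists typeC.
  rewrite -(cards1 a0); apply: eq_card => a; rewrite !inE.
  apply/andP/eqP => [[wa ca] | ->]; last by [].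
  exact: cone_point_unique.
apply/eqP; rewrite cards_eq0; apply/eqP/setP => a; rewrite !inE.
by apply/negbTE/andP => -[wa ca]; apply: typeNC; apply: (cone_weight_type ca wa).
Qed.

End Cone.

Lemma in_cone_inj (I : fnset) (C C' : seq fnset) (e : seq nat)
  (a : {ffun 'I_(size (fs I)) -> 'I_(size e)}) :
  is_setcomp I C -> is_setcomp I C' -> in_cone C a -> in_cone C' a -> weight_is a ->
  C = C'.
Proof.
move=> scC scC' ca ca' wa.
have size_nz := size_nzpos_setcomp scC ca wa.
have size_nz' := size_nzpos_setcomp scC' ca' wa.
have blockidxE x : x \in fs I -> blockidx C x = blockidx C' x.
  move=> xI; have xi : index x (fs I) < size (fs I) by rewrite index_mem.
  have := cone_point_nzpos scC ca wa (Ordinal xi).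
  rewrite (cone_point_nzpos scC' ca' wa) /= nth_index // => /eqP.
  have ltC : blockidx C x < size (nzpos e) by rewrite size_nz (blockidx_lt scC).
  have ltC' : blockidx C' x < size (nzpos e) by rewrite size_nz' (blockidx_lt scC').
  by rewrite nth_uniq ?nzpos_uniq // => /eqP.
apply: (@eq_from_nth _ fempty) => [|t ltC]; first by rewrite -size_nz size_nz'.
have ltC' : t < size C' by rewrite -size_nz' size_nz.
apply: fnset_ext => x; rewrite (mem_nth_setcomp scC) // (mem_nth_setcomp scC') //.
by case xI : (x \in fs I) => //=; rewrite blockidxE.
Qed.

Lemma mem_subseqs (s t : seq nat) : t \in subseqs s -> subseq t s.
Proof.
elim: s t => [|x s IH] t /=; first by rewrite inE => /eqP ->.
rewrite mem_cat => /orP [/mapP [t' /IH st' ->] | /IH st]; first by rewrite /= eqxx.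
exact: (subseq_trans st (subseq_cons s x)).
Qed.

Lemma subseqs_uniq (s : seq nat) : uniq s -> uniq (subseqs s).
Proof.
elim: s => [|x s IH] //= /andP [xNs us].
rewrite cat_uniq (map_inj_uniq (fun a b (e : x :: a = x :: b) => congr1 behead e)) IH //=.
rewrite andbT; apply/hasP => -[t tin /mapP [t' _ et]].
have /mem_subseq/(_ x) := mem_subseqs tin; rewrite et inE eqxx => /(_ isT).
by rewrite (negbTE xNs).
Qed.

Lemma subsets_uniq I : uniq (subsets I).
Proof.
rewrite /subsets map_inj_in_uniq ?subseqs_uniq ?fs_uniq // => t t' tin t'in ett'.
have st : sorted ltn t := subseq_sorted ltn_trans (mem_subseqs tin) (fs_sorted I).
have st' : sorted ltn t' := subseq_sorted ltn_trans (mem_subseqs t'in) (fs_sorted I).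
by rewrite -(fs_fset_of st) -(fs_fset_of st') ett'.
Qed.

Lemma size_tuples_of (T : eqType) k (L : seq T) t : t \in tuples_of k L -> size t = k.
Proof.
elim: k t => [|k IH] t /=; first by rewrite inE => /eqP ->.
by case/allpairsP => -[x t'] [_ /IH <- ->].
Qed.

Lemma tuples_of_uniq (T : eqType) k (L : seq T) : uniq L -> uniq (tuples_of k L).
Proof.
by move=> uL; elim: k => [|k IH] //=; apply: allpairs_uniq => // -[x t] [y u] _ _ [-> ->].
Qed.

Lemma setcomps_uniq I : uniq (setcomps I).
Proof.
apply: filter_uniq; elim: (size (fs I)).+1 0 => [|b IH] k //=.
rewrite cat_uniq tuples_of_uniq ?subsets_uniq ?IH ?andbT //=.
apply/hasP => -[t /flattenP [s /mapP [k']]]; rewrite mem_iota => /andP [ltk _] -> tk'.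
by move=> /size_tuples_of tk; move: ltk; rewrite -(size_tuples_of tk') tk ltnn.
Qed.

Lemma setcomps_is_setcomp I C : C \in setcomps I -> is_setcomp I C.
Proof. by rewrite mem_filter => /andP []. Qed.

Lemma count_has_at_most_one (T : eqType) (s : seq T) (P : pred T) :
  uniq s -> {in s &, forall x y, P x -> P y -> x = y} -> count P s = has P s.
Proof.
elim: s => [|x s IH] //= /andP [xNs us] P1.
rewrite IH // => [|y z ys zs]; last by apply: P1; rewrite inE ?ys ?zs orbT.
case: (boolP (P x)) => //= Px; case: (boolP (has P s)) => // /hasP [y ys Py].
by move: xNs; rewrite (P1 x y) ?inE ?eqxx ?ys ?orbT.
Qed.

Lemma Ehrhart_sum_Mono (S : pred (seq fnset)) (I : fnset) (e : seq nat) :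
  (\sum_(C <- setcomps I | S C) Mono (ctype C) e)%R = Ehrhart S I e.
Proof.
rewrite /Ehrhart /Mono -(big_morph Posz PoszD (erefl (Posz 0))); congr Posz.
transitivity (\sum_(C <- setcomps I | S C)
   #|[set a : {ffun 'I_(size (fs I)) -> 'I_(size e)} | weight_is a && in_cone C a]|).
  rewrite big_seq_cond [RHS]big_seq_cond; apply: eq_bigr => C /andP [Cin _].
  by rewrite card_cone_weight // setcomps_is_setcomp.
under eq_bigr => C _ do rewrite -sum1dep_card big_mkcond.
rewrite exchange_big -sum1dep_card [RHS]big_mkcond; apply: eq_bigr => a _ /=.
case: (boolP (weight_is a)) => wa /=; last by rewrite big1.
rewrite -big_mkcondr sum1_count count_has_at_most_one ?setcomps_uniq //.
move=> C C' Cin C'in /andP [_ ca] /andP [_ ca'].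
exact: (in_cone_inj (setcomps_is_setcomp Cin) (setcomps_is_setcomp C'in) ca ca' wa).
Qed.

Lemma prod_Posz_bool n (g : nat -> bool) :
  (\prod_(j < n) Posz (nat_of_bool (g j)))%R = Posz (nat_of_bool (all g (iota 0 n))).
Proof.
case: (boolP (all g (iota 0 n))) => [/allP gn | /allPn [j]].
  by rewrite big1 // => j _; rewrite gn // mem_iota ltn_ord.
rewrite mem_iota add0n => ltjn /negbTE gj.
by rewrite (bigD1 (Ordinal ltjn)) //= gj mul0r.
Qed.

Section MinorsInK.
Variables (H : HopfMonoid) (K : forall I, pred (hcar H I)) (I : fnset) (h : hcar H I).

Definition minor_inK (C : seq fnset) (j : nat) : bool :=
  if minor h C j is Some x then @K _ x else false.

Lemma prod_phiK_minors C :
  (\prod_(j < size C) phiK K (minor h C j))%R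
  = Posz (nat_of_bool (all (minor_inK C) (iota 0 (size C)))).
Proof.
by rewrite -prod_Posz_bool; apply: eq_bigr => j _; rewrite /minor_inK; case: minor.
Qed.

Lemma inDelta_notinGammaE C : is_setcomp I C ->
  inDelta h C && ~~ inGamma K h C = all (minor_inK C) (iota 0 (size C)).
Proof.
move=> scC; rewrite /inGamma /inDelta scC /=.
case: (boolP (all _ _)) => [/allP defined | /allPn [j jC undef]] /=.
  rewrite -all_predC; apply: eq_in_all => j /defined.
  by rewrite /minor_inK /=; case: minor => [x _|] //=; rewrite negbK.
by apply/esym/negbTE/allPn; exists j => //; rewrite /minor_inK; case: minor undef.
Qed.

Lemma Psi_phiK e :
  Psi (phiK K) h e
  = (\sum_(C <- setcomps I | inDelta h C && ~~ inGamma K h C) Mono (ctype C) e)%R.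
Proof.
rewrite /Psi [RHS]big_mkcond /=; apply: eq_big_seq => C /setcomps_is_setcomp scC.
by rewrite prod_phiK_minors inDelta_notinGammaE //; case: all; rewrite ?mul1r ?mul0r.
Qed.

End MinorsInK.

Lemma fD_fD_fsub P S S' : fsub P S -> fD (fD S' P) (fD S P) = fD S' S.
Proof.
move=> /fsubP sPS; apply: fnset_ext => u; rewrite !mem_fD.
by case: (boolP (u \in fs P)) => [/sPS -> | _]; rewrite ?andbF ?andbT.
Qed.

Lemma pred_hrel_idn (H : HopfMonoid) (P : forall I, pred (hcar H I)) A B (c : hcar H A) :
  A = B -> P B (hrel A B idn c) = P A c.
Proof. by case: B /; rewrite hrel_id. Qed.

(* (h|_S')/S is the minor (m|_(S' \ P))/(S \ P) of m = (h|_Q)/P, by the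
   axioms hres_res, hres_con and hcon_con. *)
Lemma submonoid_finer_minor (H : HopfMonoid) (K : forall I, pred (hcar H I))
  (I P S S' Q : fnset) (h : hcar H I) m c :
  is_submonoid K -> fsub P S -> fsub S S' -> fsub S' Q -> fsub Q I ->
  obind (hcon P) (hres I Q h) = Some m -> K _ m ->
  obind (hcon S) (hres I S' h) = Some c -> K _ c.
Proof.
case=> _ _ _ Kres Kcon sPS sSS' sS'Q sQI.
case Ex : (hres I Q h) => [x|] //= Em Km.
case Ey : (hres I S' h) => [y|] //= Ec.
have xy := hres_res H I Q S' h sS'Q sQI; rewrite Ex Ey /= in xy.
have := hres_con H Q S' P x (fsub_trans sPS sSS') sS'Q; rewrite xy Em /=.
have := hcon_con H S' S P y sPS sSS'; rewrite Ec /=.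
case: (hcon P y) => [z|] //= zc mz.
have Kz := Kres _ _ _ _ (fsubD P sS'Q) Km (esym mz).
have := Kcon _ _ _ _ (fsubD P sSS') Kz zc.
by rewrite pred_hrel_idn // fD_fD_fsub.
Qed.

Lemma mem_pref C k x : (x \in fs (pref C k)) = has (fun B => x \in fs B) (take k C).
Proof. exact: mem_bigU. Qed.

Lemma fsub_pref C k k' : k <= k' -> fsub (pref C k) (pref C k').
Proof.
by move=> lekk'; apply/fsubP => x; rewrite !mem_pref -(subnKC lekk') takeD has_cat => ->.
Qed.

Lemma fsub_pref_setcomp I C k : is_setcomp I C -> fsub (pref C k) I.
Proof.
move=> scC; apply/fsubP => x; rewrite mem_pref (mem_setcomp scC) => /hasP [B Bin xB].
by apply/hasP; exists B => //; apply: mem_take Bin.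
Qed.

Lemma flatten_take_reshape (T : Type) (r : seq nat) (s : seq T) j :
  flatten (take j (reshape r s)) = take (sumn (take j r)) s.
Proof.
elim: r s j => [|k r IH] s [|j] /=; rewrite ?take0 //.
by rewrite IH takeD.
Qed.

Lemma pref_reshape (C : seq fnset) r j :
  pref (map bigU (reshape r C)) j = pref C (sumn (take j r)).
Proof.
apply: fnset_ext => x; rewrite !mem_pref -flatten_take_reshape -map_take has_map.
by elim: (take j (reshape r C)) => //= l L ->; rewrite has_cat mem_bigU.
Qed.

Lemma reshape_index_bounds (r : seq nat) i : i < sumn r ->
  sumn (take (reshape_index r i) r) <= i < sumn (take (reshape_index r i).+1 r).
Proof.
move=> ir; move: (reshape_offsetP ir) (reshape_indexP ir) (reshape_indexK r i).
rewrite /flatten_index; set j := reshape_index r i; set c := reshape_offset r i => ltc ltj <-.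
by rewrite leq_addr (take_nth 0 ltj) sumn_rcons ltn_add2l.
Qed.

Lemma inGamma_coarsening (H : HopfMonoid) (K : forall I, pred (hcar H I)) (I : fnset)
  (h : hcar H I) (C D : seq fnset) :
  is_submonoid K -> inGamma K h C -> inDelta h D -> coarsening D C -> inGamma K h D.
Proof.
move=> subK /andP [/andP [scC _] /hasP [i]]; rewrite mem_iota add0n => ltiC notKi.
move=> /[dup] deltaD /andP [scD definedD] [r [_ sumr DE]].
rewrite -sumr in ltiC; have /andP [lo up] := reshape_index_bounds ltiC.
set j := reshape_index r i in lo up.
have ltjD : j < size D by rewrite DE size_map size_reshape reshape_indexP.
rewrite /inGamma deltaD; apply/hasP; exists j; first by rewrite mem_iota.
have /allP/(_ j) := definedD; rewrite mem_iota /= => /(_ ltjD).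
case Em : minor => [m|] //= _; apply/negP => Km.
move: notKi; case Ec : minor => [c|] //=; apply/negP/negPn.
apply: (submonoid_finer_minor subK _ (fsub_pref C (leqnSn i)) _ _ Em Km Ec).
- by rewrite DE pref_reshape; apply: fsub_pref.
- by rewrite DE pref_reshape; apply: fsub_pref.
- exact: fsub_pref_setcomp.
Qed.

Theorem mainTheorem3 (H : HopfMonoid) (K : forall I, pred (hcar H I))
  (I : fnset) (h : hcar H I) :
  is_submonoid K ->
  (forall C D : seq fnset,
      inGamma K h C -> inDelta h D -> coarsening D C -> inGamma K h D) /\
  (forall e : seq nat,
      Psi (phiK K) h e
      = (\sum_(C <- setcomps I | inDelta h C && ~~ inGamma K h C) Mono (ctype C) e)%R) /\
  (forall e : seq nat,
      Psi (phiK K) h e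
      = Ehrhart (fun C => inDelta h C && ~~ inGamma K h C) I e).
Proof.
move=> subK; split; first by move=> C D; apply: inGamma_coarsening.
by split=> e; rewrite Psi_phiK // Ehrhart_sum_Mono.
Qed.
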